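(* Let $p\geq1$ and let $(E,d)$ be a separable, locally compact geodesic space. For every $J\in\mathbb{N}^*$ and nonnegative weights $(\lambda_j)_{1\leq j\leq J}$ with $\sum_j\lambda_j=1$, there exists a Borel map $T:E^J\to E$ such that for every $(x_1,\dots,x_J)\in E^J$, $T(x_1,\dots,x_J)$ is a minimizer of $x\mapsto\sum_{j=1}^J\lambda_j d^p(x,x_j)$ over $E$.
   Context: A geodesic space is a complete metric space $(E,d)$ in which every two points $x,y$ have a mid-point, i.e. a point $z$ with $d(x,z)=d(z,y)=\tfrac12 d(x,y)$. *)

From Stdlib Require Import Reals Lra List.
From Stdlib Require Fin.
Open Scope R_scope.

Definition is_metric {E : Type} (d : E -> E -> R) : Prop :=
  (forall x y, 0 <= d x y) /\
  (forall x y, d x y = 0 <-> x = y) /\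
  (forall x y, d x y = d y x) /\
  (forall x y z, d x z <= d x y + d y z).

Definition cauchy {E : Type} (d : E -> E -> R) (u : nat -> E) : Prop :=
  forall eps, 0 < eps -> exists N, forall m n, (N <= m)%nat -> (N <= n)%nat -> d (u m) (u n) < eps.

Definition converges_to {E : Type} (d : E -> E -> R) (u : nat -> E) (l : E) : Prop :=
  forall eps, 0 < eps -> exists N, forall n, (N <= n)%nat -> d (u n) l < eps.

Definition complete {E : Type} (d : E -> E -> R) : Prop :=
  forall u, cauchy d u -> exists l, converges_to d u l.

Definition geodesic {E : Type} (d : E -> E -> R) : Prop :=
  is_metric d /\ complete d /\
  forall x y, exists z, d x z = d x y / 2 /\ d z y = d x y / 2.

Definition is_open {E : Type} (d : E -> E -> R) (U : E -> Prop) : Prop :=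
  forall x, U x -> exists r, 0 < r /\ forall y, d x y < r -> U y.

Definition compact {E : Type} (d : E -> E -> R) (K : E -> Prop) : Prop :=
  forall (I : Type) (U : I -> E -> Prop),
    (forall i, is_open d (U i)) ->
    (forall x, K x -> exists i, U i x) ->
    exists l : list I, forall x, K x -> exists i, In i l /\ U i x.

Definition locally_compact {E : Type} (d : E -> E -> R) : Prop :=
  forall x, exists K, compact d K /\
    exists r, 0 < r /\ forall y, d x y < r -> K y.

Definition separable {E : Type} (d : E -> E -> R) : Prop :=
  exists D : E -> Prop,
    (exists f : E -> nat, forall x y, D x -> D y -> f x = f y -> x = y) /\
    (forall x eps, 0 < eps -> exists y, D y /\ d x y < eps).

Definition is_open_prod {E : Type} (d : E -> E -> R) (J : nat)
    (U : (Fin.t J -> E) -> Prop) : Prop :=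
  forall x, U x -> exists r, 0 < r /\
    forall y, (forall j, d (x j) (y j) < r) -> U y.

Inductive borel {X : Type} (op : (X -> Prop) -> Prop) : (X -> Prop) -> Prop :=
| borel_open : forall U, op U -> borel op U
| borel_compl : forall A, borel op A -> borel op (fun x => ~ A x)
| borel_cunion : forall A : nat -> X -> Prop,
    (forall n, borel op (A n)) -> borel op (fun x => exists n, A n x)
| borel_ext : forall A B, borel op A -> (forall x, A x <-> B x) -> borel op B.

Definition borel_map {X Y : Type} (opX : (X -> Prop) -> Prop)
    (opY : (Y -> Prop) -> Prop) (f : X -> Y) : Prop :=
  forall B, borel opY B -> borel opX (fun x => B (f x)).

Fixpoint sumFin (n : nat) : (Fin.t n -> R) -> R :=
  match n return (Fin.t n -> R) -> R with
  | O => fun _ => 0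
  | S m => fun f => f Fin.F1 + sumFin m (fun i => f (Fin.FS i))
  end.

(* a^p for a >= 0 and real p >= 1 (0^p = 0) *)
Definition rpow (a p : R) : R :=
  match Rle_lt_dec a 0 with
  | left _ => 0
  | right _ => Rpower a p
  end.

Definition barycost {E : Type} (d : E -> E -> R) (p : R) (J : nat)
    (lam : Fin.t J -> R) (xs : Fin.t J -> E) (x : E) : R :=
  sumFin J (fun j => lam j * rpow (d x (xs j)) p).

(* A complete, locally compact space with midpoints is proper: the radii of compact closed
   balls around a point form an interval that contains its supremum (closed balls are totally
   bounded, using approximate points on segments) and is open at the top (finitely many compact
   balls cover a neighbourhood of a compact ball), so it is all of [0, +oo).  The cost
   [barycost] is then continuous and coercive, hence has minimizers.  Having a minimizer in a
   compact set is a countable Boolean combination of open conditions on the data (compare with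
   dyadic levels), so "some minimizer lies within [rho] of [c]" is Borel.  Along a dense
   sequence, choose at stage [n] the first point within [2^-n] of a minimizer and within
   [2^-(n-1)] of the previous choice: these centres are Borel in the data and Cauchy, and their
   limit is a minimizer depending Borel-measurably on the data. *)

From Pilot Require Import Defs.
From Stdlib Require Import Reals List.
From Stdlib Require Fin.
From Stdlib Require Import ConstructiveEpsilon ZArith Lra Lia Classical ClassicalEpsilon.
Open Scope R_scope.

Definition half_pow (n : nat) : R := / 2 ^ n.

Lemma half_pow_pos n : 0 < half_pow n.
Proof. apply Rinv_0_lt_compat, pow_lt; lra. Qed.

Lemma half_pow_S n : half_pow (S n) = half_pow n / 2.
Proof. unfold half_pow; simpl. rewrite Rinv_mult. lra. Qed.

Lemma half_pow_small eps : 0 < eps -> exists n, half_pow n < eps.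
Proof.
  intros Heps. destruct (pow_lt_1_zero (/ 2) ltac:(rewrite Rabs_right; lra) eps Heps) as [N HN].
  exists N. specialize (HN N (le_n N)).
  unfold half_pow. rewrite <- pow_inv, <- (Rabs_right ((/ 2) ^ N)); auto.
  apply Rle_ge, pow_le; lra.
Qed.

Lemma rpow_nonpos a p : a <= 0 -> rpow a p = 0.
Proof. intros H; unfold rpow; destruct (Rle_lt_dec a 0); lra. Qed.

Lemma rpow_pos a p : 0 < a -> rpow a p = Rpower a p.
Proof. intros H; unfold rpow; destruct (Rle_lt_dec a 0); auto; lra. Qed.

Lemma rpow_ge0 a p : 0 <= rpow a p.
Proof. unfold rpow; destruct (Rle_lt_dec a 0); [lra | left; apply exp_pos]. Qed.

Lemma rpow_ge_self a p : 1 <= p -> 1 <= a -> a <= rpow a p.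
Proof.
  intros Hp Ha. rewrite rpow_pos by lra.
  rewrite <- (Rpower_1 a) at 1 by lra. now apply Rle_Rpower.
Qed.

Lemma Rpower_le_self a p : 1 <= p -> 0 < a < 1 -> Rpower a p <= a.
Proof.
  intros Hp Ha. rewrite <- (exp_ln a) at 2 by lra. unfold Rpower.
  assert (ln a < 0) by (rewrite <- ln_1; apply ln_increasing; lra).
  destruct (Req_dec p 1) as [->|Hp1]; [rewrite Rmult_1_l; lra |].
  left. apply exp_increasing. nra.
Qed.

(* At [a = 0], continuity comes from [b^p <= b] for [0 < b < 1]. *)
Lemma rpow_continuous p a eps : 1 <= p -> 0 <= a -> 0 < eps ->
  exists delta, 0 < delta /\ forall b, 0 <= b -> Rabs (b - a) < delta ->
    Rabs (rpow b p - rpow a p) < eps.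
Proof.
  intros Hp Ha Heps. destruct (Req_dec a 0) as [->|Ha0].
  - exists (Rmin 1 eps). split; [now apply Rmin_glb_lt; lra |].
    intros b Hb Hba. rewrite (rpow_nonpos 0), Rminus_0_r by lra.
    rewrite Rminus_0_r, Rabs_right in Hba by lra.
    pose proof (Rmin_l 1 eps); pose proof (Rmin_r 1 eps).
    destruct (Rle_lt_dec b 0).
    + rewrite rpow_nonpos, Rabs_R0 by auto. lra.
    + rewrite rpow_pos by auto. pose proof (Rpower_le_self b p Hp ltac:(lra)).
      rewrite Rabs_right by (left; apply exp_pos). lra.
  - assert (Hcont : continuity_pt (fun x => Rpower x p) a).
    { apply derivable_continuous_pt. exists (p * Rpower a (p - 1)).
      apply derivable_pt_lim_power. lra. }
    destruct (Hcont eps Heps) as [delta [Hdelta Hclose]].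
    exists (Rmin delta (a / 2)). split; [apply Rmin_glb_lt; lra |].
    intros b Hb Hba.
    pose proof (Rmin_l delta (a / 2)); pose proof (Rmin_r delta (a / 2)).
    assert (0 < b) by (apply Rabs_def2 in Hba; lra).
    rewrite !rpow_pos by lra.
    destruct (Req_dec a b) as [<-|Hab]; [rewrite Rminus_diag, Rabs_R0; lra |].
    apply (Hclose b). repeat split; auto. simpl. unfold Rdist. lra.
Qed.

Lemma sumFin_ge0 n (f : Fin.t n -> R) : (forall i, 0 <= f i) -> 0 <= sumFin n f.
Proof.
  induction n as [|n IH]; intros Hf; simpl; [lra |].
  pose proof (Hf Fin.F1). pose proof (IH (fun i => f (Fin.FS i)) (fun i => Hf _)). lra.
Qed.

Lemma sumFin_ge_term n (f : Fin.t n -> R) j : (forall i, 0 <= f i) -> f j <= sumFin n f.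
Proof.
  induction j as [n|n j IH]; intros Hf; simpl.
  - pose proof (sumFin_ge0 n (fun i => f (Fin.FS i)) (fun i => Hf _)). lra.
  - pose proof (Hf Fin.F1). pose proof (IH (fun i => f (Fin.FS i)) (fun i => Hf _)). lra.
Qed.

Lemma sumFin_eq0 n (f : Fin.t n -> R) : (forall i, f i = 0) -> sumFin n f = 0.
Proof.
  induction n as [|n IH]; intros Hf; simpl; [lra |].
  rewrite Hf, (IH (fun i => f (Fin.FS i)) (fun i => Hf _)). lra.
Qed.

Lemma sumFin_pos_term n (f : Fin.t n -> R) :
  (forall i, 0 <= f i) -> 0 < sumFin n f -> exists j, 0 < f j.
Proof.
  intros Hf Hsum. apply NNPP; intros Hnone.
  enough (sumFin n f = 0) by lra.
  apply sumFin_eq0. intros i. destruct (Hf i) as [Hi|Hi]; auto.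
  exfalso; eauto.
Qed.

Lemma sumFin_rpow_continuous p n (lam a0 : Fin.t n -> R) eps : 1 <= p ->
  (forall j, 0 <= a0 j) -> 0 < eps -> exists delta, 0 < delta /\
  forall a : Fin.t n -> R, (forall j, 0 <= a j) -> (forall j, Rabs (a j - a0 j) < delta) ->
  Rabs (sumFin n (fun j => lam j * rpow (a j) p) - sumFin n (fun j => lam j * rpow (a0 j) p))
    < eps.
Proof.
  intros Hp. revert lam a0 eps. induction n as [|n IH]; intros lam a0 eps Ha0 Heps.
  - exists 1. split; [lra |]. intros. simpl. rewrite Rminus_diag, Rabs_R0. lra.
  - set (c := Rabs (lam Fin.F1) + 1).
    assert (Hc : 0 < c) by (pose proof (Rabs_pos (lam Fin.F1)); unfold c; lra).
    destruct (rpow_continuous p (a0 Fin.F1) (eps / 2 / c) Hp (Ha0 _))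
      as [d1 [Hd1 Hhead]]; [apply Rdiv_lt_0_compat; lra |].
    destruct (IH (fun i => lam (Fin.FS i)) (fun i => a0 (Fin.FS i)) (eps / 2)
                 (fun i => Ha0 _)) as [d2 [Hd2 Htail]]; [lra |].
    exists (Rmin d1 d2). split; [apply Rmin_glb_lt; lra |].
    intros a Ha Hclose. simpl.
    pose proof (Rmin_l d1 d2) as Hd1min; pose proof (Rmin_r d1 d2) as Hd2min.
    specialize (Hhead (a Fin.F1) (Ha _) (Rlt_le_trans _ _ _ (Hclose _) Hd1min)).
    specialize (Htail (fun i => a (Fin.FS i)) (fun i => Ha _)
                      (fun i => Rlt_le_trans _ _ _ (Hclose _) Hd2min)).
    simpl in Htail.
    set (l1 := lam Fin.F1) in *.
    set (u := rpow (a Fin.F1) p - rpow (a0 Fin.F1) p) in *.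
    set (S := sumFin n (fun i => lam (Fin.FS i) * rpow (a (Fin.FS i)) p)) in *.
    set (S0 := sumFin n (fun i => lam (Fin.FS i) * rpow (a0 (Fin.FS i)) p)) in *.
    replace (l1 * rpow (a Fin.F1) p + S - (l1 * rpow (a0 Fin.F1) p + S0))
      with (l1 * u + (S - S0)) by (unfold u; ring).
    eapply Rle_lt_trans; [apply Rabs_triang |]. rewrite Rabs_mult.
    assert (Rabs l1 * Rabs u <= eps / 2).
    { apply Rle_trans with (c * (eps / 2 / c)); [| right; field; lra].
      apply Rmult_le_compat; try apply Rabs_pos; [unfold c; lra | lra]. }
    lra.
Qed.

Lemma list_argmin {A : Type} (f : A -> R) (a : A) (l : list A) :
  exists m, In m (a :: l) /\ forall b, In b (a :: l) -> f m <= f b.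
Proof.
  revert a. induction l as [|b l IH]; intros a.
  - exists a. split; [now left |]. intros b [<-|[]]. lra.
  - destruct (IH b) as [m [Hm Hmin]].
    destruct (Rle_lt_dec (f a) (f m)).
    + exists a. split; [now left |]. intros c [<-|Hc]; [lra |]. specialize (Hmin c Hc). lra.
    + exists m. split; [now right |]. intros c [<-|Hc]; [lra | auto].
Qed.

Lemma dependent_choice_nat {A : Type} (P : nat -> A -> Prop) (Rel : nat -> A -> A -> Prop) :
  (exists a, P 0%nat a) -> (forall n a, P n a -> exists b, P (S n) b /\ Rel n a b) ->
  exists u : nat -> A, forall n, P n (u n) /\ Rel n (u n) (u (S n)).
Proof.
  intros [a0 Ha0] Hstep.
  set (next n a := match excluded_middle_informative (exists b, P (S n) b /\ Rel n a b) with
                   | left h => proj1_sig (constructive_indefinite_description _ h)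
                   | right _ => a end).
  assert (Hnext : forall n a, P n a -> P (S n) (next n a) /\ Rel n a (next n a)).
  { intros n a Ha. unfold next. destruct excluded_middle_informative as [h|h].
    - exact (proj2_sig (constructive_indefinite_description _ h)).
    - exfalso; auto. }
  set (u := fix u n := match n with O => a0 | S k => next k (u k) end).
  exists u. assert (Hu : forall n, P n (u n)).
  { induction n; [exact Ha0 | exact (proj1 (Hnext n (u n) IHn))]. }
  intros n. split; [apply Hu | exact (proj2 (Hnext n (u n) (Hu n)))].
Qed.

(** * Compactness in metric spaces *)

Section FiniteCover.
Context {E I : Type} (U : I -> E -> Prop).

Definition finitely_covered (S : E -> Prop) : Prop :=
  exists l : list I, forall y, S y -> exists i, In i l /\ U i y.

Lemma finitely_covered_union_list (S : E -> Prop) (T : E -> E -> Prop) (L : list E) :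
  (forall c, In c L -> finitely_covered (fun y => S y /\ T c y)) ->
  finitely_covered (fun y => S y /\ exists c, In c L /\ T c y).
Proof.
  induction L as [|a L IH]; intros H.
  - exists nil. intros y [_ [c [[] _]]].
  - destruct (H a (or_introl eq_refl)) as [l1 H1].
    destruct IH as [l2 H2]; [intros c Hc; apply H; now right |].
    exists (l1 ++ l2). intros y [Sy [c [[<-|Hc] Tc]]].
    + destruct (H1 y (conj Sy Tc)) as [i [Hi Ui]].
      exists i. split; [apply in_or_app; now left | exact Ui].
    + destruct (H2 y (conj Sy (ex_intro _ c (conj Hc Tc)))) as [i [Hi Ui]].
      exists i. split; [apply in_or_app; now right | exact Ui].
Qed.

Lemma not_finitely_covered_split (S : E -> Prop) (T : E -> E -> Prop) (L : list E) :
  ~ finitely_covered S -> (forall y, S y -> exists c, In c L /\ T c y) ->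
  exists c, In c L /\ ~ finitely_covered (fun y => S y /\ T c y).
Proof.
  intros HS Hcov. apply NNPP; intros Hall. apply HS.
  destruct (finitely_covered_union_list S T L) as [l Hl].
  { intros c Hc. apply NNPP; intros Hn. apply Hall; eauto. }
  exists l. intros y Sy. apply Hl. auto.
Qed.

Lemma not_finitely_covered_inhabited S : ~ finitely_covered S -> exists y, S y.
Proof.
  intros H. apply NNPP; intros Hn. apply H.
  exists nil. intros y Sy. exfalso; eauto.
Qed.

Lemma not_finitely_covered_mono (S S' : E -> Prop) :
  ~ finitely_covered S -> (forall y, S y -> S' y) -> ~ finitely_covered S'.
Proof. intros H Hsub [l Hl]. apply H. exists l. auto. Qed.

End FiniteCover.

Section Compactness.
Context {E : Type} (d : E -> E -> R).

Definition is_closed (A : E -> Prop) : Prop := is_open d (fun y => ~ A y).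
Definition cball (x : E) (r : R) : E -> Prop := fun y => d x y <= r.

Lemma compact_closed_subset K A :
  Defs.compact d K -> is_closed A -> (forall y, A y -> K y) -> Defs.compact d A.
Proof.
  intros HK HA HAK I U HU Hcov.
  destruct (HK (option I) (fun o => match o with Some i => U i | None => fun y => ~ A y end))
    as [l Hl].
  - intros [i|]; auto.
  - intros x Kx. destruct (classic (A x)) as [Ax|nAx].
    + destruct (Hcov x Ax) as [i Hi]. now exists (Some i).
    + now exists None.
  - exists (flat_map (fun o => match o with Some i => i :: nil | None => nil end) l).
    intros x Ax. destruct (Hl x (HAK x Ax)) as [[i|] [Hin Hi]]; [| contradiction].
    exists i. split; auto. apply in_flat_map. exists (Some i). split; [auto | now left].
Qed.

Lemma compact_union A B :
  Defs.compact d A -> Defs.compact d B -> Defs.compact d (fun y => A y \/ B y).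
Proof.
  intros HA HB I U HU Hcov.
  destruct (HA I U HU) as [l1 H1]; [intros x Ax; apply Hcov; auto |].
  destruct (HB I U HU) as [l2 H2]; [intros x Bx; apply Hcov; auto |].
  exists (l1 ++ l2). intros x [Ax|Bx].
  - destruct (H1 x Ax) as [i [Hi Ui]]. exists i. split; auto. apply in_or_app; auto.
  - destruct (H2 x Bx) as [i [Hi Ui]]. exists i. split; auto. apply in_or_app; auto.
Qed.

Lemma compact_union_list {A : Type} (K : A -> E -> Prop) (l : list A) :
  (forall a, In a l -> Defs.compact d (K a)) ->
  Defs.compact d (fun z => exists a, In a l /\ K a z).
Proof.
  induction l as [|a l IH]; intros Hl I U HU Hcov.
  - exists nil. intros x [y [[] _]].
  - destruct (compact_union (K a) (fun z => exists b, In b l /\ K b z)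
                (Hl a (or_introl eq_refl)) (IH (fun b Hb => Hl b (or_intror Hb))) I U HU)
      as [l' Hl'].
    + intros x [Kx|[b [Hb Kx]]]; apply Hcov; [exists a | exists b]; simpl; auto.
    + exists l'. intros x [b [[<-|Hb] Kx]]; apply Hl'; [now left | right; eauto].
Qed.

(* Cover [K] by the open sets [{y | f c < f y}]: a point of a finite subcover minimizing [f]
   would lie in one of them. *)
Lemma compact_attains_min (K : E -> Prop) (f : E -> R) : Defs.compact d K -> (exists y, K y) ->
  (forall y0 eps, 0 < eps -> exists delta, 0 < delta /\
     forall y, d y0 y < delta -> Rabs (f y - f y0) < eps) ->
  exists y, K y /\ forall z, K z -> f y <= f z.
Proof.
  intros HK [y0 Ky0] Hf. apply NNPP; intros Hno.
  assert (Hlower : forall y, K y -> exists z, K z /\ f z < f y).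
  { intros y Ky. apply NNPP; intros Hn. apply Hno. exists y. split; auto.
    intros z Kz. destruct (Rle_lt_dec (f y) (f z)); auto. exfalso; eauto. }
  destruct (HK {c | K c} (fun c y => f (proj1_sig c) < f y)) as [[|c l] Hl].
  - intros [c Kc] y Hy. simpl in Hy.
    destruct (Hf y (f y - f c) ltac:(lra)) as [delta [Hdelta Hd]].
    exists delta. split; auto. intros z Hz. specialize (Hd z Hz). apply Rabs_def2 in Hd.
    simpl. lra.
  - intros y Ky. destruct (Hlower y Ky) as [z [Kz Hz]]. now exists (exist _ z Kz).
  - destruct (Hl y0 Ky0) as [i [[] _]].
  - destruct (list_argmin (fun c => f (proj1_sig c)) c l) as [m [Hm Hmin]].
    destruct (Hl (proj1_sig m) (proj2_sig m)) as [i [Hi Hfi]].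
    specialize (Hmin i Hi). lra.
Qed.

End Compactness.

Section MetricSpace.
Context {E : Type} (d : E -> E -> R).
Hypothesis d_metric : is_metric d.

Lemma dist_ge0 x y : 0 <= d x y.
Proof. apply d_metric. Qed.
Lemma dist_sym x y : d x y = d y x.
Proof. apply d_metric. Qed.
Lemma dist_triangle x y z : d x z <= d x y + d y z.
Proof. apply d_metric. Qed.
Lemma dist_refl x : d x x = 0.
Proof. now apply d_metric. Qed.

Lemma dist_lipschitz y y0 a : Rabs (d y a - d y0 a) <= d y y0.
Proof.
  pose proof (dist_triangle y y0 a). pose proof (dist_triangle y0 y a).
  rewrite (dist_sym y0 y) in *. apply Rabs_le; lra.
Qed.

Lemma ball_open x r : is_open d (fun y => d x y < r).
Proof.
  intros y Hy. exists (r - d x y). split; [lra |].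
  intros z Hz. pose proof (dist_triangle x y z). lra.
Qed.

Lemma cball_closed x r : is_closed d (cball d x r).
Proof.
  intros y Hy. unfold cball in Hy. exists (d x y - r). split; [lra |].
  intros z Hz Hc. unfold cball in Hc.
  pose proof (dist_triangle x z y). rewrite (dist_sym z y) in *. lra.
Qed.

Lemma cball_compact_mono x r r' :
  Defs.compact d (cball d x r') -> r <= r' -> Defs.compact d (cball d x r).
Proof.
  intros H Hr. apply (compact_closed_subset d _ _ H (cball_closed x r)).
  unfold cball; intros; lra.
Qed.

Lemma compact_totally_bounded K eps : Defs.compact d K -> 0 < eps ->
  exists l, forall y, K y -> exists c, In c l /\ d c y < eps.
Proof.
  intros HK Heps. apply (HK E (fun c y => d c y < eps)).
  - intros c; apply ball_open.
  - intros y _. exists y. now rewrite dist_refl.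
Qed.

End MetricSpace.

Section CompleteSpace.
Context {E : Type} (d : E -> E -> R).
Hypothesis d_metric : is_metric d.
Hypothesis d_complete : Defs.complete d.

Lemma geometric_sequence_converges (u : nat -> E) C : 0 <= C ->
  (forall n, d (u n) (u (S n)) <= C * half_pow n) ->
  exists l, forall n, d (u n) l <= 2 * C * half_pow n.
Proof.
  intros HC Hu.
  assert (Htail : forall k n, d (u n) (u (n + k)%nat) <= 2 * C * (half_pow n - half_pow (n + k))).
  { induction k as [|k IH]; intros n.
    - rewrite Nat.add_0_r, dist_refl by exact d_metric. lra.
    - rewrite Nat.add_succ_r.
      pose proof (dist_triangle d d_metric (u n) (u (n + k)%nat) (u (S (n + k)))).
      pose proof (IH n). pose proof (Hu (n + k)%nat). rewrite half_pow_S. lra. }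
  assert (Hbound : forall n m, (n <= m)%nat -> d (u n) (u m) <= 2 * C * half_pow n).
  { intros n m Hnm. replace m with (n + (m - n))%nat by lia.
    pose proof (Htail (m - n)%nat n). pose proof (half_pow_pos (n + (m - n))). nra. }
  destruct (d_complete u) as [l Hl].
  - intros eps Heps. destruct (half_pow_small (eps / (4 * C + 1))) as [N HN].
    { apply Rdiv_lt_0_compat; lra. }
    exists N. intros m n Hm Hn.
    pose proof (Hbound N m Hm); pose proof (Hbound N n Hn).
    pose proof (dist_triangle d d_metric (u m) (u N) (u n)).
    rewrite (dist_sym d d_metric (u m) (u N)) in *.
    assert (half_pow N * (4 * C + 1) < eps).
    { apply Rmult_lt_compat_r with (r := 4 * C + 1) in HN; [| lra].
      unfold Rdiv in HN. rewrite Rmult_assoc, Rinv_l in HN; lra. }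
    pose proof (half_pow_pos N). nra.
  - exists l. intros n. apply Rle_plus_epsilon. intros eps Heps.
    destruct (Hl eps Heps) as [N HN].
    pose proof (HN (max n N) ltac:(lia)). pose proof (Hbound n (max n N) ltac:(lia)).
    pose proof (dist_triangle d d_metric (u n) (u (max n N)) l). lra.
Qed.

(* A cover without finite subcover yields nested balls of radii [2^-k] that are not finitely
   covered; their centres converge to a point of [A] whose covering open set swallows a ball. *)
Lemma closed_totally_bounded_compact A : is_closed d A ->
  (forall eps, 0 < eps -> exists l : list E, forall y, A y -> exists c, In c l /\ d c y < eps) ->
  Defs.compact d A.
Proof.
  intros HA Htb I U HU Hcov. apply NNPP; intros Hnot.
  set (Good k c := ~ finitely_covered U (fun y => A y /\ d c y < half_pow k)).
  destruct (dependent_choice_nat Good (fun k c c' => d c c' <= 2 * half_pow k))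
    as [u Hu].
  - destruct (Htb (half_pow 0) (half_pow_pos 0)) as [L HL].
    destruct (not_finitely_covered_split U A (fun c y => d c y < half_pow 0) L Hnot HL)
      as [c [_ Hc]].
    now exists c.
  - intros k c Hc. destruct (Htb (half_pow (S k)) (half_pow_pos _)) as [L HL].
    destruct (not_finitely_covered_split U (fun y => A y /\ d c y < half_pow k)
                (fun c' y => d c' y < half_pow (S k)) L Hc) as [c' [_ Hc']].
    { intros y [Ay _]. auto. }
    exists c'. split.
    + apply (not_finitely_covered_mono U _ _ Hc'). intros y [[Ay _] Hy]. auto.
    + destruct (not_finitely_covered_inhabited U _ Hc') as [y [[_ H1] H2]].
      pose proof (dist_triangle d d_metric c y c'). rewrite (dist_sym d d_metric y c') in *.
      rewrite half_pow_S in H2. pose proof (half_pow_pos k). lra.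
  - destruct (geometric_sequence_converges u 2 ltac:(lra) (fun n => proj2 (Hu n)))
      as [l Hl].
    assert (Hnear : forall rho, 0 < rho ->
               exists n, forall y, d (u n) y < half_pow n -> d l y < rho).
    { intros rho Hrho. destruct (half_pow_small (rho / 5)) as [n Hn]; [lra |].
      exists n. intros y Hy. pose proof (Hl n) as Hln.
      pose proof (dist_triangle d d_metric l (u n) y) as Htri.
      rewrite (dist_sym d d_metric l (u n)) in Htri. lra. }
    assert (Al : A l).
    { apply NNPP; intros nAl. destruct (HA l nAl) as [rho [Hrho Hball]].
      destruct (Hnear rho Hrho) as [n Hn].
      destruct (not_finitely_covered_inhabited U _ (proj1 (Hu n))) as [y [Ay Hy]].
      apply (Hball y); auto. }
    destruct (Hcov l Al) as [i Ui]. destruct (HU i l Ui) as [rho [Hrho Hball]].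
    destruct (Hnear rho Hrho) as [n Hn].
    apply (proj1 (Hu n)). exists (i :: nil). intros y [_ Hy]. exists i.
    split; [now left | auto].
Qed.

End CompleteSpace.

(** * Properness of locally compact geodesic spaces *)

Section GeodesicSpace.
Context {E : Type} (d : E -> E -> R).
Hypothesis d_metric : is_metric d.
Hypothesis d_midpoint : forall x y, exists z, d x z = d x y / 2 /\ d z y = d x y / 2.

Lemma segment_point_dyadic n x y s : 0 <= s <= d x y ->
  exists z, d x z <= s /\ d z y <= d x y - s + d x y * half_pow n.
Proof.
  revert x y s. induction n as [|n IH]; intros x y s Hs.
  - exists x. rewrite (dist_refl d d_metric). unfold half_pow; simpl. rewrite Rinv_1. lra.
  - destruct (d_midpoint x y) as [m [Hxm Hmy]].
    destruct (Rle_lt_dec s (d x y / 2)).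
    + destruct (IH x m s ltac:(lra)) as [z [Hz1 Hz2]].
      exists z. split; auto. pose proof (dist_triangle d d_metric z m y).
      rewrite half_pow_S. rewrite Hxm in Hz2. lra.
    + destruct (IH m y (s - d x y / 2) ltac:(lra)) as [z [Hz1 Hz2]].
      exists z. pose proof (dist_triangle d d_metric x m z).
      rewrite half_pow_S. rewrite Hmy in Hz2. split; lra.
Qed.

Lemma segment_point x y s eps : 0 <= s <= d x y -> 0 < eps ->
  exists z, d x z <= s /\ d z y <= d x y - s + eps.
Proof.
  intros Hs Heps. pose proof (dist_ge0 d d_metric x y).
  destruct (half_pow_small (eps / (d x y + 1))) as [n Hn]; [apply Rdiv_lt_0_compat; lra |].
  destruct (segment_point_dyadic n x y s Hs) as [z [Hz1 Hz2]].
  exists z. split; auto.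
  assert (d x y * half_pow n <= eps).
  { apply Rmult_lt_compat_l with (r := d x y + 1) in Hn; [| lra].
    unfold Rdiv in Hn. rewrite (Rmult_comm eps), <- Rmult_assoc, Rinv_r in Hn by lra.
    pose proof (half_pow_pos n). nra. }
  lra.
Qed.

Hypothesis d_complete : Defs.complete d.
Hypothesis d_locally_compact : locally_compact d.

Lemma small_cball_compact x : exists rho, 0 < rho /\ Defs.compact d (cball d x rho).
Proof.
  destruct (d_locally_compact x) as [K [HK [r [Hr Hball]]]]. exists (r / 2). split; [lra |].
  apply (compact_closed_subset d K _ HK (cball_closed d d_metric x _)).
  intros y Hy. apply Hball. unfold cball in Hy. lra.
Qed.

(* By [segment_point], every point of [cball x r] is [eps/4]-close to [cball x (r - eta)]. *)
Lemma cball_compact_sup x r : 0 < r ->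
  (forall r', r' < r -> Defs.compact d (cball d x r')) -> Defs.compact d (cball d x r).
Proof.
  intros HR Hsmall. apply (closed_totally_bounded_compact d d_metric d_complete).
  { apply cball_closed; exact d_metric. }
  intros eps Heps. set (eta := Rmin (eps / 4) (r / 2)).
  assert (eta <= eps / 4) by apply Rmin_l. assert (eta <= r / 2) by apply Rmin_r.
  assert (0 < eta) by (apply Rmin_glb_lt; lra).
  destruct (compact_totally_bounded d d_metric (cball d x (r - eta)) (eps / 4)
              (Hsmall (r - eta) ltac:(lra)) ltac:(lra)) as [L HL].
  exists L. intros y Hy. unfold cball in Hy.
  destruct (Rle_lt_dec (d x y) (r - eta)) as [Hin|Hout].
  - destruct (HL y Hin) as [c [Hc Hcy]]. exists c. split; auto. lra.
  - destruct (segment_point x y (r - eta) (eps / 4) ltac:(lra) ltac:(lra)) as [z [Hz1 Hz2]].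
    destruct (HL z Hz1) as [c [Hc Hcz]]. exists c. split; auto.
    pose proof (dist_triangle d d_metric c z y). lra.
Qed.

Lemma cball_compact_enlarge x r : 0 <= r -> Defs.compact d (cball d x r) ->
  exists delta, 0 < delta /\ Defs.compact d (cball d x (r + delta)).
Proof.
  intros HR HK.
  set (Centre := {yr : E * R | 0 < snd yr /\ Defs.compact d (cball d (fst yr) (snd yr))}).
  destruct (HK Centre (fun c z => d (fst (proj1_sig c)) z < snd (proj1_sig c) / 2))
    as [[|c0 l] Hl].
  - intros c. apply ball_open; exact d_metric.
  - intros y _. destruct (small_cball_compact y) as [rho [Hrho Hc]].
    exists (exist _ (y, rho) (conj Hrho Hc)). simpl. rewrite (dist_refl d d_metric). lra.
  - exfalso. destruct (Hl x) as [i [[] _]]. unfold cball. rewrite (dist_refl d d_metric). lra.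
  - destruct (list_argmin (fun c => snd (proj1_sig c)) c0 l) as [m [_ Hmin]].
    set (delta := snd (proj1_sig m) / 2).
    assert (Hdelta : 0 < delta) by (unfold delta; pose proof (proj1 (proj2_sig m)); lra).
    exists (delta / 2). split; [lra |].
    apply (compact_closed_subset d
             (fun z => exists c, In c (c0 :: l) /\ cball d (fst (proj1_sig c)) (snd (proj1_sig c)) z)).
    + apply compact_union_list. intros c _. exact (proj2 (proj2_sig c)).
    + apply cball_closed; exact d_metric.
    + intros z Hz. unfold cball in Hz.
      assert (Hw : exists w, d x w <= r /\ d w z < delta).
      { destruct (Rle_lt_dec (d x z) r).
        - exists z. rewrite (dist_refl d d_metric). auto.
        - destruct (segment_point x z r (delta / 4) ltac:(lra) ltac:(lra)) as [w [Hw1 Hw2]].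
          exists w. split; [exact Hw1 | lra]. }
      destruct Hw as [w [Hxw Hwz]]. destruct (Hl w Hxw) as [c [Hc Hcw]].
      exists c. split; auto. simpl in Hcw.
      change (d (fst (proj1_sig c)) z <= snd (proj1_sig c)).
      pose proof (dist_triangle d d_metric (fst (proj1_sig c)) w z). pose proof (Hmin c Hc).
      unfold delta in Hwz. lra.
Qed.

(* If some closed ball were not compact, the supremum [rsup] of the compact radii would be finite;
   [cball_compact_sup] shows it is attained and [cball_compact_enlarge] then exceeds it. *)
Theorem cball_compact x r : Defs.compact d (cball d x r).
Proof.
  revert r. apply NNPP; intros Hn. apply not_all_ex_not in Hn. destruct Hn as [r0 Hr0].
  set (Good r := Defs.compact d (cball d x r)).
  assert (Hbounded : forall r, Good r -> r <= r0).
  { intros r Hr. destruct (Rle_lt_dec r r0); auto. exfalso. apply Hr0.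
    apply (cball_compact_mono d d_metric x r0 r); auto. lra. }
  destruct (small_cball_compact x) as [rho0 [Hrho0 Hc0]].
  destruct (completeness Good) as [rsup [Hub Hlub]]; [now exists r0 | now exists rho0 |].
  assert (HRpos : 0 < rsup) by (pose proof (Hub rho0 Hc0); lra).
  assert (Hbelow : forall r, r < rsup -> Good r).
  { intros r Hr. apply NNPP; intros nGood.
    enough (rsup <= r) by lra.
    apply Hlub. intros r' Hr'. destruct (Rle_lt_dec r' r); auto.
    exfalso. apply nGood. apply (cball_compact_mono d d_metric x r r'); auto. lra. }
  destruct (cball_compact_enlarge x rsup ltac:(lra) (cball_compact_sup x rsup HRpos Hbelow))
    as [delta [Hdelta Hc]].
  pose proof (Hub _ Hc). lra.
Qed.

End GeodesicSpace.

(** * Borel sets *)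

Section BorelSets.
Context {X : Type} (op : (X -> Prop) -> Prop).

Lemma borel_union A B : borel op A -> borel op B -> borel op (fun x => A x \/ B x).
Proof.
  intros HA HB.
  apply borel_ext with (fun x => exists n : nat, (match n with O => A | _ => B end) x).
  - apply borel_cunion. intros [|n]; auto.
  - intros x. split.
    + intros [[|n] H]; auto.
    + intros [H|H]; [exists O | exists 1%nat]; auto.
Qed.

Lemma borel_inter A B : borel op A -> borel op B -> borel op (fun x => A x /\ B x).
Proof.
  intros HA HB. apply borel_ext with (fun x => ~ (~ A x \/ ~ B x)).
  - apply borel_compl, borel_union; apply borel_compl; auto.
  - intros x. tauto.
Qed.

Lemma borel_forall_nat (A : nat -> X -> Prop) :
  (forall n, borel op (A n)) -> borel op (fun x => forall n, A n x).
Proof.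
  intros H. apply borel_ext with (fun x => ~ exists n, ~ A n x).
  - apply borel_compl, borel_cunion. intros n. apply borel_compl; auto.
  - intros x. split.
    + intros Hn n. apply NNPP. intros HAn. apply Hn. eauto.
    + intros Hn [n HAn]. auto.
Qed.

Lemma borel_const_and (P : Prop) B : borel op B -> borel op (fun x => P /\ B x).
Proof.
  intros HB. destruct (classic P) as [HP|HP].
  - apply borel_ext with B; [auto | intros x; tauto].
  - apply borel_ext with (fun x => B x /\ ~ B x); [apply borel_inter, borel_compl; auto | intros x; tauto].
Qed.

Lemma borel_const_imp (P : Prop) B : borel op B -> borel op (fun x => P -> B x).
Proof.
  intros HB. destruct (classic P) as [HP|HP].
  - apply borel_ext with B; [auto | intros x; tauto].
  - apply borel_ext with (fun x => B x \/ ~ B x); [apply borel_union, borel_compl; auto | intros x; tauto].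
Qed.

End BorelSets.

Lemma borel_map_of_open {X Y : Type} (opX : (X -> Prop) -> Prop) (opY : (Y -> Prop) -> Prop)
    (f : X -> Y) :
  (forall U, opY U -> borel opX (fun x => U (f x))) -> borel_map opX opY f.
Proof.
  intros Hopen B HB. induction HB as [U HU|A _ IH|A _ IH|A B _ IH HAB].
  - auto.
  - now apply borel_compl.
  - now apply borel_cunion.
  - apply borel_ext with (fun x => A (f x)); auto.
Qed.

(* [least P] is [0] when [P] is empty. *)
Definition least (P : nat -> Prop) : nat :=
  match excluded_middle_informative (exists n, P n) with
  | left h => proj1_sig (epsilon_smallest P (fun n => excluded_middle_informative (P n)) h)
  | right _ => 0%nat
  end.

Lemma least_spec P : (exists n, P n) -> P (least P) /\ forall m, P m -> (least P <= m)%nat.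
Proof.
  intros h. unfold least. destruct excluded_middle_informative as [h'|]; [| contradiction].
  exact (proj2_sig (epsilon_smallest P _ h')).
Qed.

Lemma least_eq P k :
  (exists n, P n) -> (least P = k <-> P k /\ forall m, (m < k)%nat -> ~ P m).
Proof.
  intros h. destruct (least_spec P h) as [HP Hmin]. split.
  - intros <-. split; auto. intros m Hm HPm. specialize (Hmin m HPm). lia.
  - intros [HPk Hk]. specialize (Hmin k HPk).
    destruct (Nat.eq_dec (least P) k) as [|Hne]; auto.
    exfalso. apply (Hk (least P)); auto. lia.
Qed.

Lemma separable_dense_sequence {E : Type} (d : E -> E -> R) : separable d -> inhabited E ->
  exists q : nat -> E, forall x eps, 0 < eps -> exists n, d x (q n) < eps.
Proof.
  intros [D [[f Hf] Hdense]] [e0].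
  exists (fun n => match excluded_middle_informative (exists x, D x /\ f x = n) with
                   | left h => proj1_sig (constructive_indefinite_description _ h)
                   | right _ => e0 end).
  intros x eps Heps. destruct (Hdense x eps Heps) as [y [Dy Hy]]. exists (f y).
  destruct excluded_middle_informative as [h|h]; [| exfalso; eauto].
  destruct (constructive_indefinite_description _ h) as [y' [Dy' Hy']]. simpl.
  now rewrite (Hf y' y Dy' Dy Hy').
Qed.

(** * The barycentric cost *)

Lemma is_open_prod_union {E : Type} (d : E -> E -> R) J (I : Type)
    (U : I -> (Fin.t J -> E) -> Prop) :
  (forall i, is_open_prod d J (U i)) -> is_open_prod d J (fun x => exists i, U i x).
Proof.
  intros HU x [i Hi]. destruct (HU i x Hi) as [r [Hr Hball]].
  exists r. split; auto. intros y Hy. exists i. auto.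
Qed.

Section Barycost.
Context {E : Type} (d : E -> E -> R) (p : R) (J : nat) (lam : Fin.t J -> R).
Hypothesis d_metric : is_metric d.
Hypothesis p_ge1 : 1 <= p.
Hypothesis lam_ge0 : forall j, 0 <= lam j.

Lemma barycost_ge0 xs y : 0 <= barycost d p J lam xs y.
Proof. apply sumFin_ge0. intros j. apply Rmult_le_pos; [auto | apply rpow_ge0]. Qed.

Lemma barycost_continuous xs y0 eps : 0 < eps -> exists delta, 0 < delta /\
  forall y, d y0 y < delta -> Rabs (barycost d p J lam xs y - barycost d p J lam xs y0) < eps.
Proof.
  intros Heps.
  destruct (sumFin_rpow_continuous p J lam (fun j => d y0 (xs j)) eps p_ge1
              (fun j => dist_ge0 d d_metric _ _) Heps) as [delta [Hdelta H]].
  exists delta. split; auto. intros y Hy. apply (H (fun j => d y (xs j))).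
  - intros j. apply dist_ge0; exact d_metric.
  - intros j. eapply Rle_lt_trans; [apply dist_lipschitz; exact d_metric |].
    now rewrite (dist_sym d d_metric).
Qed.

Lemma barycost_sublevel_open y t : is_open_prod d J (fun xs => barycost d p J lam xs y < t).
Proof.
  intros xs Hxs.
  destruct (sumFin_rpow_continuous p J lam (fun j => d y (xs j)) (t - barycost d p J lam xs y)
              p_ge1 (fun j => dist_ge0 d d_metric _ _) ltac:(lra)) as [delta [Hdelta H]].
  exists delta. split; auto. intros xs' Hxs'.
  assert (Hclose : Rabs (barycost d p J lam xs' y - barycost d p J lam xs y)
                     < t - barycost d p J lam xs y).
  { apply (H (fun j => d y (xs' j))).
    - intros j. apply dist_ge0; exact d_metric.
    - intros j. rewrite (dist_sym d d_metric y), (dist_sym d d_metric y).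
      eapply Rle_lt_trans; [apply dist_lipschitz; exact d_metric |].
      now rewrite (dist_sym d d_metric). }
  apply Rabs_def2 in Hclose. lra.
Qed.

Hypothesis lam_sum : sumFin J lam = 1.
Hypothesis d_proper : forall x r, Defs.compact d (cball d x r).

(* Coercivity: with [lam j0 > 0], outside a large ball around [xs j0] the single term
   [lam j0 d^p(z, xs j0)] already exceeds the cost of [xs j0]. *)
Lemma barycost_has_minimizer xs :
  exists y, forall z, barycost d p J lam xs y <= barycost d p J lam xs z.
Proof.
  set (F := barycost d p J lam xs).
  destruct (sumFin_pos_term J lam lam_ge0 ltac:(lra)) as [j0 Hj0].
  set (c := F (xs j0)). set (rho := Rmax 1 (c / lam j0 + 1)).
  assert (1 <= rho) by apply Rmax_l. assert (c / lam j0 + 1 <= rho) by apply Rmax_r.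
  destruct (compact_attains_min d (cball d (xs j0) rho) F (d_proper _ _)) as [y [Ky Hy]].
  - exists (xs j0). unfold cball. rewrite (dist_refl d d_metric). lra.
  - intros y0 eps Heps. now apply barycost_continuous.
  - exists y. intros z. destruct (Rle_lt_dec (d (xs j0) z) rho) as [Hz|Hz]; [now apply Hy |].
    apply Rle_trans with c.
    { apply Hy. unfold cball. rewrite (dist_refl d d_metric). lra. }
    assert (Hterm : lam j0 * rpow (d z (xs j0)) p <= F z).
    { apply (sumFin_ge_term J (fun j => lam j * rpow (d z (xs j)) p) j0).
      intros j. apply Rmult_le_pos; [auto | apply rpow_ge0]. }
    rewrite (dist_sym d d_metric) in Hz.
    pose proof (rpow_ge_self (d z (xs j0)) p p_ge1 ltac:(lra)).
    assert (c / lam j0 * lam j0 = c) by (field; lra).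
    assert (lam j0 * (c / lam j0 + 1) <= lam j0 * rpow (d z (xs j0)) p)
      by (apply Rmult_le_compat_l; lra).
    nra.
Qed.

End Barycost.

(** * Borel selection of minimizers *)

Section BorelSelection.
Context {X E : Type} (op : (X -> Prop) -> Prop) (d : E -> E -> R) (F : X -> E -> R).
Hypothesis op_union : forall (I : Type) (U : I -> X -> Prop),
  (forall i, op (U i)) -> op (fun x => exists i, U i x).
Hypothesis d_metric : is_metric d.
Hypothesis d_complete : Defs.complete d.
Hypothesis d_proper : forall x r, Defs.compact d (cball d x r).
Hypothesis F_ge0 : forall x y, 0 <= F x y.
Hypothesis F_continuous : forall x y0 eps, 0 < eps -> exists delta, 0 < delta /\
  forall y, d y0 y < delta -> Rabs (F x y - F x y0) < eps.
Hypothesis F_sublevel_open : forall y t, op (fun x => F x y < t).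

Definition minimizer (x : X) (y : E) : Prop := forall z, F x y <= F x z.

Hypothesis F_has_minimizer : forall x, exists y, minimizer x y.

Definition dyadic (k m : nat) : R := INR m * half_pow k.

Lemma dyadic_between a b : 0 <= a < b -> exists k m, a < dyadic k m < b.
Proof.
  intros Hab. destruct (half_pow_small (b - a)) as [k Hk]; [lra |].
  pose proof (half_pow_pos k).
  destruct (archimed (a / half_pow k)) as [Hup1 Hup2].
  assert (Hup : (0 < up (a / half_pow k))%Z).
  { apply lt_IZR. apply Rle_lt_trans with (a / half_pow k); auto.
    apply Rmult_le_pos; [lra | left; now apply Rinv_0_lt_compat]. }
  exists k, (Z.to_nat (up (a / half_pow k))). unfold dyadic.
  rewrite INR_IZR_INZ, Z2Nat.id by lia.
  assert (a = a / half_pow k * half_pow k) by (field; lra).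
  split; nra.
Qed.

Definition has_minimizer_in (C : E -> Prop) (x : X) : Prop := exists y, C y /\ minimizer x y.

(* [F x] attains its minimum on the compact [C]; that minimum is global iff it undercuts every
   dyadic level that [F x] undercuts somewhere. *)
Lemma has_minimizer_in_iff C x : Defs.compact d C ->
  (has_minimizer_in C x <-> forall k m,
     (exists z, F x z < dyadic k m) -> exists y, C y /\ F x y < dyadic k m).
Proof.
  intros HC. split.
  - intros [y [Cy Hy]] k m [z Hz]. exists y. split; auto. specialize (Hy z). lra.
  - intros Hlevels. destruct (F_has_minimizer x) as [z0 Hz0].
    assert (HCne : exists y, C y).
    { destruct (dyadic_between (F x z0) (F x z0 + 1)) as [k [m Hkm]]; [split; [auto | lra] |].
      destruct (Hlevels k m) as [y [Cy _]]; [exists z0; lra | eauto]. }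
    destruct (compact_attains_min d C (F x) HC HCne (F_continuous x)) as [y [Cy Hy]].
    exists y. split; auto. intros z. destruct (Rle_lt_dec (F x y) (F x z)) as [|Hlt]; auto.
    destruct (dyadic_between (F x z) (F x y)) as [k [m Hkm]]; [split; auto |].
    destruct (Hlevels k m) as [y' [Cy' Hy']]; [exists z; lra |].
    specialize (Hy y' Cy'). lra.
Qed.

Lemma sublevel_projection_borel (A : E -> Prop) t :
  borel op (fun x => exists y, A y /\ F x y < t).
Proof.
  apply borel_ext with (fun x => exists y : {y | A y}, F x (proj1_sig y) < t).
  - apply borel_open, op_union. intros y. apply F_sublevel_open.
  - intros x. split.
    + intros [[y Ay] Hy]. eauto.
    + intros [y [Ay Hy]]. now exists (exist _ y Ay).
Qed.

Lemma has_minimizer_in_borel C : Defs.compact d C -> borel op (has_minimizer_in C).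
Proof.
  intros HC. apply borel_ext with (fun x => forall k m,
    ~ (exists z, True /\ F x z < dyadic k m) \/ exists y, C y /\ F x y < dyadic k m).
  - apply borel_forall_nat. intros k. apply borel_forall_nat. intros m.
    apply borel_union; [apply borel_compl |]; apply sublevel_projection_borel.
  - intros x. rewrite (has_minimizer_in_iff C x HC). split.
    + intros H k m [z Hz]. destruct (H k m) as [Hn|]; auto. exfalso. eauto.
    + intros H k m. destruct (classic (exists z, F x z < dyadic k m)) as [[z Hz]|Hn].
      * right. apply H. eauto.
      * left. intros [z [_ Hz]]. eauto.
Qed.

Definition minimizer_near (c : E) (rho : R) (x : X) : Prop :=
  exists y, minimizer x y /\ d c y < rho.

Lemma minimizer_near_borel c rho : borel op (minimizer_near c rho).
Proof.
  apply borel_ext with (fun x => exists n, has_minimizer_in (cball d c (rho - half_pow n)) x).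
  - apply borel_cunion. intros n. now apply has_minimizer_in_borel.
  - intros x. split.
    + intros [n [y [Cy Hy]]]. exists y. split; auto.
      unfold cball in Cy. pose proof (half_pow_pos n). lra.
    + intros [y [Hy Hcy]]. destruct (half_pow_small (rho - d c y)) as [n Hn]; [lra |].
      exists n, y. split; auto. unfold cball. lra.
Qed.

Section DenseSequence.
Variable q : nat -> E.
Hypothesis q_dense : forall y eps, 0 < eps -> exists n, d y (q n) < eps.

(* The [n]-th centre is the first point of [q] within [2^-n] of a minimizer and within [2^-(n-1)]
   of the previous centre; choosing the least index keeps each centre a Borel function of [x]. *)
Fixpoint centre_index (n : nat) (x : X) : nat :=
  match n with
  | O => least (fun k => minimizer_near (q k) (half_pow 0) x)
  | S n' => least (fun k => minimizer_near (q k) (half_pow (S n')) x /\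
                            d (q k) (q (centre_index n' x)) < half_pow n')
  end.

Definition centre (n : nat) (x : X) : E := q (centre_index n x).

Lemma centre_index_0_exists x : exists k, minimizer_near (q k) (half_pow 0) x.
Proof.
  destruct (F_has_minimizer x) as [y Hy].
  destruct (q_dense y (half_pow 0) (half_pow_pos 0)) as [k Hk].
  exists k, y. split; auto. now rewrite (dist_sym d d_metric).
Qed.

Lemma centre_index_S_exists n x : minimizer_near (centre n x) (half_pow n) x ->
  exists k, minimizer_near (q k) (half_pow (S n)) x /\ d (q k) (centre n x) < half_pow n.
Proof.
  intros [y [Hy Hcy]].
  set (r := Rmin (half_pow (S n)) (half_pow n - d (centre n x) y)).
  assert (r <= half_pow (S n)) by apply Rmin_l.
  assert (r <= half_pow n - d (centre n x) y) by apply Rmin_r.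
  destruct (q_dense y r) as [k Hk]; [apply Rmin_glb_lt; [apply half_pow_pos | lra] |].
  exists k. split.
  - exists y. split; auto. rewrite (dist_sym d d_metric). lra.
  - pose proof (dist_triangle d d_metric (q k) y (centre n x)) as Htri.
    rewrite (dist_sym d d_metric (q k) y), (dist_sym d d_metric y (centre n x)) in Htri. lra.
Qed.

Lemma centre_minimizer_near n x : minimizer_near (centre n x) (half_pow n) x.
Proof.
  induction n as [|n IH].
  - exact (proj1 (least_spec _ (centre_index_0_exists x))).
  - exact (proj1 (proj1 (least_spec _ (centre_index_S_exists n x IH)))).
Qed.

Lemma centre_step n x : d (centre n x) (centre (S n) x) <= 1 * half_pow n.
Proof.
  destruct (least_spec _ (centre_index_S_exists n x (centre_minimizer_near n x)))
    as [[_ Hstep] _].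
  unfold centre at 2. simpl. rewrite (dist_sym d d_metric). fold (centre n x). lra.
Qed.

Lemma centre_index_borel n k : borel op (fun x => centre_index n x = k).
Proof.
  revert k. induction n as [|n IH]; intros k.
  - apply borel_ext with (fun x => minimizer_near (q k) (half_pow 0) x /\
                                   forall m, (m < k)%nat -> ~ minimizer_near (q m) (half_pow 0) x).
    + apply borel_inter; [apply minimizer_near_borel |].
      apply borel_forall_nat. intros m. apply borel_const_imp, borel_compl, minimizer_near_borel.
    + intros x. simpl. now rewrite (least_eq _ k (centre_index_0_exists x)).
  - set (Step i m x := d (q m) (q i) < half_pow n /\ minimizer_near (q m) (half_pow (S n)) x).
    assert (HStep : forall i m, borel op (Step i m)).
    { intros i m. apply borel_const_and, minimizer_near_borel. }
    apply borel_ext with (fun x => exists i, centre_index n x = i /\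
                                  (Step i k x /\ forall m, (m < k)%nat -> ~ Step i m x)).
    + apply borel_cunion. intros i. apply borel_inter; [apply IH |].
      apply borel_inter; [apply HStep |].
      apply borel_forall_nat. intros m. apply borel_const_imp, borel_compl, HStep.
    + intros x. simpl.
      rewrite (least_eq _ k (centre_index_S_exists n x (centre_minimizer_near n x))).
      unfold Step, centre. split.
      * intros [i [<- H]]. firstorder.
      * intros H. exists (centre_index n x). firstorder.
Qed.

Lemma centre_preimage_borel n (A : E -> Prop) : borel op (fun x => A (centre n x)).
Proof.
  apply borel_ext with (fun x => exists k, A (q k) /\ centre_index n x = k).
  - apply borel_cunion. intros k. apply borel_const_and, centre_index_borel.
  - intros x. unfold centre. split; [intros [k [H <-]]; auto | eauto].
Qed.

Definition selection (x : X) : E :=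
  proj1_sig (constructive_indefinite_description _
    (geometric_sequence_converges d d_metric d_complete (fun n => centre n x) 1 ltac:(lra)
       (fun n => centre_step n x))).

Lemma centre_selection_dist n x : d (centre n x) (selection x) <= 2 * half_pow n.
Proof.
  unfold selection. destruct constructive_indefinite_description as [l Hl]. simpl.
  specialize (Hl n). lra.
Qed.

Lemma selection_minimizer x : minimizer x (selection x).
Proof.
  intros z. apply Rle_plus_epsilon. intros eps Heps.
  destruct (F_continuous x (selection x) eps Heps) as [delta [Hdelta Hclose]].
  destruct (half_pow_small (delta / 3)) as [n Hn]; [lra |].
  destruct (centre_minimizer_near n x) as [y [Hy Hcy]].
  pose proof (centre_selection_dist n x) as Hsel.
  pose proof (dist_triangle d d_metric (selection x) (centre n x) y) as Htri.
  rewrite (dist_sym d d_metric (selection x) (centre n x)) in Htri.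
  specialize (Hclose y ltac:(lra)). apply Rabs_def2 in Hclose. specialize (Hy z). lra.
Qed.

(* [selection x] lies in an open [U] iff some centre [centre n x] has its [3 2^-n]-ball in [U]. *)
Lemma selection_borel : borel_map op (is_open d) selection.
Proof.
  apply borel_map_of_open. intros U HU.
  apply borel_ext with (fun x => exists n,
    forall z, d (centre n x) z < 3 * half_pow n -> U z).
  - apply borel_cunion. intros n.
    exact (centre_preimage_borel n (fun c => forall z, d c z < 3 * half_pow n -> U z)).
  - intros x. split.
    + intros [n Hn]. apply Hn. pose proof (centre_selection_dist n x).
      pose proof (half_pow_pos n). lra.
    + intros Hx. destruct (HU _ Hx) as [rho [Hrho Hball]].
      destruct (half_pow_small (rho / 5)) as [n Hn]; [lra |].
      exists n. intros z Hz. apply Hball. pose proof (centre_selection_dist n x) as Hsel.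
      pose proof (dist_triangle d d_metric (selection x) (centre n x) z) as Htri.
      rewrite (dist_sym d d_metric (selection x) (centre n x)) in Htri. lra.
Qed.

End DenseSequence.

Lemma borel_minimizer_selection : separable d ->
  exists T : X -> E, borel_map op (is_open d) T /\ forall x, minimizer x (T x).
Proof.
  intros Hsep. destruct (classic (inhabited E)) as [HE|HE].
  - destruct (separable_dense_sequence d Hsep HE) as [q Hq].
    exists (selection q Hq). split; [apply selection_borel | apply selection_minimizer].
  - assert (HX : X -> False) by (intros x; destruct (F_has_minimizer x) as [y _]; exact (HE (inhabits y))).
    exists (fun x => False_rect E (HX x)). split; [| intros x; contradiction (HX x)].
    intros B _. apply borel_ext with (fun x => exists i : False, (fun _ : X => True) x).
    + apply borel_open, op_union. intros [].
    + intros x. contradiction (HX x).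
Qed.

End BorelSelection.

Theorem mainTheorem7 (E : Type) (d : E -> E -> R) (p : R) :
  1 <= p ->
  geodesic d -> separable d -> locally_compact d ->
  forall (J : nat), (1 <= J)%nat ->
  forall lam : Fin.t J -> R,
    (forall j, 0 <= lam j) -> sumFin J lam = 1 ->
    exists T : (Fin.t J -> E) -> E,
      borel_map (is_open_prod d J) (is_open d) T /\
      forall (xs : Fin.t J -> E) (x : E),
        barycost d p J lam xs (T xs) <= barycost d p J lam xs x.
Proof.
  intros Hp [Hmetric [Hcomplete Hmid]] Hsep Hlc J _ lam Hlam Hsum.
  assert (Hproper : forall x r, Defs.compact d (cball d x r))
    by (intros; now apply cball_compact).
  apply (borel_minimizer_selection (is_open_prod d J) d (barycost d p J lam)).
  - apply is_open_prod_union.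
  - exact Hmetric.
  - exact Hcomplete.
  - exact Hproper.
  - intros; now apply barycost_ge0.
  - intros; now apply barycost_continuous.
  - intros; now apply barycost_sublevel_open.
  - intros; now apply barycost_has_minimizer.
  - exact Hsep.
Qed.
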